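(* Let $\varepsilon\in\{-1,1\}$, let $M(\phi,\xi,\eta,g_M)$ be a Lorentzian almost (para)contact manifold of dimension $2m+1$, let $(N,g_N)$ be a semi-Riemannian manifold of dimension $n$, and let $F:M\to N$ be an anti-invariant semi-Riemannian submersion. Then: (a) if $\xi$ is vertical, then $m\le n\le 2m$; (b) if $m=n$, then $\xi$ is vertical; (c) if $\xi$ is horizontal, then $m+1\le n$.
   Context: A Lorentzian almost contact ($\varepsilon=-1$), resp. almost paracontact ($\varepsilon=1$), manifold is a $(2m+1)$-dimensional manifold $M$ with Lorentzian metric $g_M$, $(1,1)$-tensor $\phi$, vector field $\xi$ (characteristic vector field) and $1$-form $\eta$ with $\phi^2X=\varepsilon X+\eta(X)\xi$, $g_M(\phi X,\phi Y)=g_M(X,Y)+\eta(X)\eta(Y)$, $\eta(X)=\varepsilon g_M(X,\xi)$, $\eta(\xi)=-\varepsilon$. A semi-Riemannian submersion $F:M\to N$ is a submersion with nondegenerate fibres such that $F_*$ is an isometry from $(\ker F_* )^\perp$ onto $TN$; it is anti-invariant if $\phi(\ker F_* )\subseteq(\ker F_* )^\perp$. $\xi$ is vertical if it takes values in $\ker F_*$, horizontal if in $(\ker F_* )^\perp$. *)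

(* pointwise (tangent-space) linear-algebra model. *)
From HB Require Import structures.
From mathcomp Require Import all_boot all_order all_algebra.
Set Implicit Arguments. Unset Strict Implicit. Unset Printing Implicit Defensive.
Import Order.TTheory GRing.Theory Num.Theory.
Local Open Scope ring_scope.

Section Defs.
Variable R : realFieldType.

Definition form N (G : 'M[R]_N) (x y : 'rV[R]_N) : R := (x *m G *m y^T) 0 0.

Definition sym_nondeg N (G : 'M[R]_N) : Prop := G^T = G /\ G \in unitmx.

Definition neg_def_on N (G : 'M[R]_N) k (U : 'M[R]_(k, N)) : Prop :=
  forall x : 'rV[R]_k, x != 0 -> form G (x *m U) (x *m U) < 0.

Definition lorentzian N (G : 'M[R]_N) : Prop :=
  sym_nondeg G /\ (exists U : 'M[R]_(1, N), neg_def_on G U) /\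
  (forall k (U : 'M[R]_(k, N)), neg_def_on G U -> (k <= 1)%N).

Definition lform N (etav : 'cV[R]_N) (X : 'rV[R]_N) : R := (X *m etav) 0 0.

(* Lorentzian almost contact (eps = -1) / paracontact (eps = 1) structure
   (phi acting as X |-> X *m Phi) on the tangent space 'rV_N *)
Definition lorentz_almost_paracontact N (eps : R) (G : 'M[R]_N)
    (Phi : 'M[R]_N) (xi : 'rV[R]_N) (etav : 'cV[R]_N) : Prop :=
  [/\ lorentzian G,
      (forall X, X *m Phi *m Phi = eps *: X + lform etav X *: xi),
      (forall X Y, form G (X *m Phi) (Y *m Phi)
                  = form G X Y + lform etav X * lform etav Y),
      (forall X, lform etav X = eps * form G X xi)
    & lform etav xi = - eps].

Definition vertical N n (Fs : 'M[R]_(N, n)) (v : 'rV[R]_N) : Prop := v *m Fs = 0.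
Definition horizontal N n (G : 'M[R]_N) (Fs : 'M[R]_(N, n)) (v : 'rV[R]_N) : Prop :=
  forall w, vertical Fs w -> form G v w = 0.

(* differential Fs : T_pM -> T_qN of a semi-Riemannian submersion at a point *)
Definition semiRiem_submersion N n (G : 'M[R]_N) (GN : 'M[R]_n)
    (Fs : 'M[R]_(N, n)) : Prop :=
  [/\ sym_nondeg GN,
      row_full Fs,
      (forall v, vertical Fs v ->
        (forall w, vertical Fs w -> form G v w = 0) -> v = 0),
      (forall X Y, horizontal G Fs X -> horizontal G Fs Y ->
        form GN (X *m Fs) (Y *m Fs) = form G X Y)
    &
      forall y : 'rV[R]_n, exists2 X, horizontal G Fs X & X *m Fs = y].

Definition anti_invariant N n (G : 'M[R]_N) (Phi : 'M[R]_N) (Fs : 'M[R]_(N, n)) : Prop :=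
  forall v, vertical Fs v -> horizontal G Fs (v *m Phi).

End Defs.

From Pilot Require Import Defs.
From HB Require Import structures.
From mathcomp Require Import all_boot all_order all_algebra.
From mathcomp Require Import zify.
Import Order.TTheory GRing.Theory Num.Theory.
Set Implicit Arguments. Unset Strict Implicit. Unset Printing Implicit Defensive.
Local Open Scope ring_scope.

(* Applying [phi] to [phi^2 = eps + eta (x) xi] shows that [eta] vanishes on
   the image of [phi] and that [ker phi] lies on the line spanned by [xi].
   Hence [phi] maps the vertical space [V], of dimension [2m + 1 - n], into
   the horizontal space, of dimension [n], losing at most one dimension, and
   none when [xi] is not vertical; when [xi] is horizontal, the image of [V]
   moreover misses [xi], which [eta] does not kill.  Counting dimensions
   gives (a), (b) and (c). *)

Lemma sub_rV_eq0 (F : fieldType) k N (A : 'M[F]_(k, N)) (v : 'rV[F]_N) :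
  (A <= v)%MS -> ~~ (v <= A)%MS -> A = 0.
Proof.
move=> Av; apply: contraNeq => A_neq0.
rewrite -(mxrank_leqif_sup Av).2 eqn_leq mxrankS //=.
by rewrite rank_rV (leq_trans (leq_b1 _)) // lt0n mxrank_eq0.
Qed.

Section AlmostParacontact.

Variables (R : realFieldType) (N : nat) (eps : R).
Variables (Phi : 'M[R]_N) (xi : 'rV[R]_N) (etav : 'cV[R]_N).
Hypothesis eps_neq0 : eps != 0.
Hypothesis Phi2 : forall X, X *m Phi *m Phi = eps *: X + lform etav X *: xi.
Hypothesis eta_xi : lform etav xi = - eps.

Lemma xi_neq0 : xi != 0.
Proof.
apply: contra_neq eps_neq0 => xi0.
by apply/eqP; rewrite -oppr_eq0 -eta_xi xi0 /lform mul0mx mxE.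
Qed.

Lemma lform_mulPhi_xi X :
  lform etav X *: (xi *m Phi) = lform etav (X *m Phi) *: xi.
Proof.
have : X *m Phi *m Phi *m Phi = (eps *: X + lform etav X *: xi) *m Phi.
  by rewrite [X *m Phi *m Phi]Phi2.
by rewrite Phi2 mulmxDl -!scalemxAl => /addrI.
Qed.

Lemma xi_mulPhi : xi *m Phi = 0.
Proof.
(* [xi Phi] is a multiple [a xi] of [xi], and [a^2 xi = xi Phi^2 = 0]. *)
set a := - (lform etav (xi *m Phi) / eps).
have xiPhi : xi *m Phi = a *: xi.
  apply: (@scalerI _ _ (- eps)); first by rewrite oppr_eq0.
  by rewrite -eta_xi lform_mulPhi_xi scalerA eta_xi /a mulrNN mulrC divfK.
have : xi *m Phi *m Phi = 0 by rewrite Phi2 eta_xi scaleNr addrN.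
rewrite xiPhi -scalemxAl xiPhi scalerA => /eqP.
rewrite scaler_eq0 (negPf xi_neq0) orbF mulf_eq0 orbb => /eqP a0.
by rewrite a0 scale0r.
Qed.

Lemma lform_mulPhi X : lform etav (X *m Phi) = 0.
Proof.
have := lform_mulPhi_xi X; rewrite xi_mulPhi scaler0 => /esym/eqP.
by rewrite scaler_eq0 (negPf xi_neq0) orbF => /eqP.
Qed.

Lemma kermx_Phi_sub_xi : (kermx Phi <= xi)%MS.
Proof.
apply/row_subP => i; set X := row i (kermx Phi).
have : X *m Phi *m Phi = 0 by rewrite -row_mul mulmx_ker row0 mul0mx.
rewrite Phi2 => /eqP; rewrite addr_eq0 => /eqP epsX.
by rewrite -(scalerK eps_neq0 X) epsX -scaleNr scalerA scalemx_sub.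
Qed.

Lemma xi_notin_mulPhi k (A : 'M[R]_(k, N)) : ~~ (xi <= A *m Phi)%MS.
Proof.
apply/negP => /submxP [D xiD].
have := lform_mulPhi (D *m A); rewrite -mulmxA -xiD eta_xi => /eqP.
by rewrite oppr_eq0 (negPf eps_neq0).
Qed.

Lemma mxrank_mulPhi_ge k (A : 'M[R]_(k, N)) :
  (\rank A <= \rank (A *m Phi) + 1)%N.
Proof.
rewrite -(mxrank_mul_ker A Phi) leq_add2l.
apply: leq_trans (rank_leq_row xi).
exact/mxrankS/(submx_trans (capmxSr _ _) kermx_Phi_sub_xi).
Qed.

Lemma mxrank_mulPhi k (A : 'M[R]_(k, N)) :
  ~~ (xi <= A)%MS -> \rank (A *m Phi) = \rank A.
Proof.
move=> xi_notin_A; apply/mxrank_injP/eqP.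
apply: sub_rV_eq0 (submx_trans (capmxSr _ _) kermx_Phi_sub_xi) _.
by apply: contra xi_notin_A => /submx_trans; apply; apply: capmxSl.
Qed.

Lemma mxrank_addsmx_mulPhi_xi k (A : 'M[R]_(k, N)) :
  \rank (A *m Phi + xi)%MS = (\rank (A *m Phi) + 1)%N.
Proof.
rewrite mxrank_disjoint_sum ?rank_rV ?xi_neq0 //.
apply: sub_rV_eq0 (capmxSr _ _) _.
by apply: contra (xi_notin_mulPhi A) => /submx_trans; apply; apply: capmxSl.
Qed.

End AlmostParacontact.

Section Submersion.

Variables (R : realFieldType) (N n : nat) (G : 'M[R]_N).

Definition orthomx k (A : 'M[R]_(k, N)) : 'M[R]_N := kermx (G *m A^T).

Lemma mxrank_orthomx k (A : 'M[R]_(k, N)) :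
  G \in unitmx -> \rank (orthomx A) = (N - \rank A)%N.
Proof.
move=> G_unit; rewrite mxrank_ker -mxrank_tr trmx_mul trmxK.
by rewrite mxrankMfree // row_free_unit unitmx_tr.
Qed.

Lemma sub_orthomx k (A : 'M[R]_(k, N)) (v : 'rV[R]_N) :
  (forall i, Defs.form G v (row i A) = 0) -> (v <= orthomx A)%MS.
Proof.
move=> v_orth; apply/sub_kermxP/rowP => i.
have -> : (v *m (G *m A^T)) 0 i = Defs.form G v (row i A).
  by rewrite /Defs.form mulmxA !mxE; apply: eq_bigr => j _; rewrite !mxE.
by rewrite v_orth mxE.
Qed.

Lemma mxrank_orthomx_kermx (Fs : 'M[R]_(N, n)) :
  G \in unitmx -> row_full Fs -> \rank (orthomx (kermx Fs)) = n.
Proof.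
move=> G_unit /eqP Fs_full.
by rewrite mxrank_orthomx // mxrank_ker Fs_full subKn // -Fs_full rank_leq_row.
Qed.

Lemma horizontal_sub_orthomx (Fs : 'M[R]_(N, n)) v :
  horizontal G Fs v -> (v <= orthomx (kermx Fs))%MS.
Proof. by move=> v_hor; apply: sub_orthomx => i; apply/v_hor/sub_kermxP/row_sub. Qed.

Lemma anti_invariant_sub_orthomx (Phi : 'M[R]_N) (Fs : 'M[R]_(N, n)) :
  anti_invariant G Phi Fs -> (kermx Fs *m Phi <= orthomx (kermx Fs))%MS.
Proof.
move=> anti; apply/row_subP => i; rewrite row_mul.
exact/horizontal_sub_orthomx/anti/sub_kermxP/row_sub.
Qed.

End Submersion.

Theorem mainTheorem3 (R : realFieldType) (eps : R) (m n : nat)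
    (G : 'M[R]_(2 * m + 1)) (Phi : 'M[R]_(2 * m + 1))
    (xi : 'rV[R]_(2 * m + 1)) (etav : 'cV[R]_(2 * m + 1))
    (GN : 'M[R]_n) (Fs : 'M[R]_(2 * m + 1, n)) :
  (eps = 1 \/ eps = -1) ->
  lorentz_almost_paracontact eps G Phi xi etav ->
  semiRiem_submersion G GN Fs ->
  anti_invariant G Phi Fs ->
  [/\ (vertical Fs xi -> (m <= n)%N /\ (n <= 2 * m)%N),
      (m = n -> vertical Fs xi)
    & (horizontal G Fs xi -> (m + 1 <= n)%N)].
Proof.
move=> eps_pm1 [[[_ G_unit] _] Phi2 _ eta_form eta_xi] [_ Fs_full _ _ _] anti.
have eps_neq0 : eps != 0 by case: eps_pm1 => ->; rewrite ?oppr_eq0 oner_eq0.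
set V := kermx Fs.
have rkV : (\rank V = 2 * m + 1 - n)%N by rewrite mxrank_ker (eqP Fs_full).
have rkH : (\rank (orthomx G V) = n)%N := mxrank_orthomx_kermx G_unit Fs_full.
have rkVPhi : (\rank (V *m Phi) <= n)%N.
  by rewrite -rkH mxrankS // anti_invariant_sub_orthomx.
have rkVPhi_ge : (\rank V <= \rank (V *m Phi) + 1)%N :=
  mxrank_mulPhi_ge eps_neq0 Phi2 V.
have rkVPhi_eq : ~~ (xi <= V)%MS -> \rank (V *m Phi) = \rank V :=
  mxrank_mulPhi eps_neq0 Phi2 (A := V).
have vertical_sub_V v : vertical Fs v <-> (v <= V)%MS by split=> /sub_kermxP.
split.
- move=> /vertical_sub_V/mxrankS.
  rewrite rank_rV (xi_neq0 eps_neq0 eta_xi) /=; lia.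
- by move=> mn; apply/vertical_sub_V/negPn/negP => /rkVPhi_eq; lia.
- move=> xi_hor.
  have xi_notin_V : ~~ (xi <= V)%MS.
    apply/negP => /vertical_sub_V/xi_hor xi_isotropic.
    by move: eps_neq0; rewrite -oppr_eq0 -eta_xi eta_form xi_isotropic mulr0 eqxx.
  have sub_H : (V *m Phi + xi <= orthomx G V)%MS.
    by rewrite addsmx_sub anti_invariant_sub_orthomx // horizontal_sub_orthomx.
  have : (\rank (V *m Phi + xi) <= n)%N by rewrite -rkH mxrankS.
  rewrite (mxrank_addsmx_mulPhi_xi eps_neq0 Phi2 eta_xi) rkVPhi_eq // rkV; lia.
Qed.
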